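(* Let $T$ be a complete theory and $\mathcal{M}$ a sufficiently saturated model of $T$. (1) The set $\mathcal{SL}_{\rm acl}(T)$ of all regular operators of the form ${\rm acl}^\Delta$ ($\Delta$ a set of formulae), ordered by pointwise inclusion, is a lower semilattice (any two elements have a greatest lower bound, given by intersection) with a least and a greatest element. (2) For $n\in\omega\setminus\{0\}$, the set $\mathcal{SL}_{{\rm acl}_n}(T)$ of all regular operators of the form ${\rm acl}^\Delta_n$, ordered by pointwise inclusion, is a lower semilattice with a least element; it has a greatest element if the operator ${\rm acl}_n$ is regular.
   Context: For a set $\Delta$ of formulae $\varphi(x,\overline{y})$ and $A\subseteq M$, ${\rm acl}^\Delta(A)$ is the union of the solution sets $\varphi(\mathcal{M},\overline{a})$ over $\varphi\in\Delta$ and tuples $\overline{a}$ from $A$ such that $\varphi(x,\overline{a})$ has finitely many solutions; ${\rm acl}^\Delta_n(A)$ is the analogous union over those with at most $n$ solutions. ${\rm acl}_n$ is ${\rm acl}^\Delta_n$ with $\Delta$ the set of all formulae, and ${\rm acl}$ is ${\rm acl}^\Delta$ with $\Delta$ all formulae. An operator ${\rm cl}$ on subsets of $M$ is regular if $A\subseteq{\rm cl}(A)$ and ${\rm cl}({\rm cl}(A))\subseteq{\rm cl}(A)$ for all $A\subseteq M$. Pointwise inclusion: ${\rm cl}_1\leq{\rm cl}_2$ iff ${\rm cl}_1(A)\subseteq{\rm cl}_2(A)$ for all $A$. *)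

From mathcomp Require Import ssreflect ssrfun ssrbool eqtype ssrnat seq fintype.
From Stdlib Require Import List.

Set Implicit Arguments.
Unset Strict Implicit.
Unset Printing Implicit Defensive.

Record language := Language {
  Fun : Type; Rel : Type;
  farity : Fun -> nat; rarity : Rel -> nat }.

Section Syntax.
Variable L : language.

Inductive term : Type :=
  | tvar : nat -> term
  | tapp : forall f : Fun L, ('I_(farity f) -> term) -> term.

Inductive formula : Type :=
  | fFalse : formula
  | fEq : term -> term -> formula
  | fRel : forall r : Rel L, ('I_(rarity r) -> term) -> formula
  | fNeg : formula -> formula
  | fAnd : formula -> formula -> formula
  | fOr : formula -> formula -> formula
  | fEx : nat -> formula -> formula.   (* fEx n phi = exists v_n, phi *)

Fixpoint term_free (i : nat) (t : term) : Prop :=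
  match t with
  | tvar j => i = j
  | tapp f args => exists k, term_free i (args k)
  end.

Fixpoint free_in (i : nat) (phi : formula) : Prop :=
  match phi with
  | fFalse => False
  | fEq t1 t2 => term_free i t1 \/ term_free i t2
  | fRel r args => exists k, term_free i (args k)
  | fNeg p => free_in i p
  | fAnd p q => free_in i p \/ free_in i q
  | fOr p q => free_in i p \/ free_in i q
  | fEx n p => i <> n /\ free_in i p
  end.

Definition sentence (phi : formula) : Prop := forall i, ~ free_in i phi.

(* A formula phi(x, y_1..y_k): free variables among v_0 (= x), v_1..v_k. *)
Record pformula := PFormula {
  pk : nat;
  pform : formula;
  pbound : forall i, free_in i pform -> i <= pk }.

End Syntax.

Record structure (L : language) := Structure {
  carrier :> Type;
  witness : carrier;       (* structures are nonempty *)
  funI : forall f : Fun L, ('I_(farity f) -> carrier) -> carrier;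
  relI : forall r : Rel L, ('I_(rarity r) -> carrier) -> Prop }.

Section Semantics.
Variables (L : language) (M : structure L).

Fixpoint teval (v : nat -> M) (t : term L) : M :=
  match t with
  | tvar j => v j
  | tapp f args => @funI L M f (fun k => teval v (args k))
  end.

Definition upd (v : nat -> M) (n : nat) (a : M) : nat -> M :=
  fun i => if i == n then a else v i.

Fixpoint sat (v : nat -> M) (phi : formula L) : Prop :=
  match phi with
  | fFalse => False
  | fEq t1 t2 => teval v t1 = teval v t2
  | fRel r args => @relI L M r (fun k => teval v (args k))
  | fNeg p => ~ sat v p
  | fAnd p q => sat v p /\ sat v q
  | fOr p q => sat v p \/ sat v q
  | fEx n p => exists a, sat (upd v n a) p
  end.

Definition models_sent (phi : formula L) : Prop := sat (fun _ => witness M) phi.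

(* phi(M, a) for a tuple a of length pk phi : the solution set in x = v_0 *)
Definition env (m : M) k (a : 'I_k -> M) : nat -> M :=
  fun i => match i with
           | 0 => m
           | j.+1 => match insub j with Some o => a o | None => m end
           end.

Definition sol (phi : pformula L) (a : 'I_(pk phi) -> M) : M -> Prop :=
  fun m => sat (env m a) (pform phi).

End Semantics.

Definition models (L : language) (M : structure L) (T : formula L -> Prop) :=
  forall phi, T phi -> models_sent M phi.

Definition complete_theory (L : language) (T : formula L -> Prop) : Prop :=
  (forall phi, T phi -> sentence phi) /\
  (exists N : structure L, models N T) /\
  (forall sigma, sentence sigma ->
     (forall N : structure L, models N T -> models_sent N sigma) \/
     (forall N : structure L, models N T -> models_sent N (fNeg sigma))).

Section Saturation.
Variables (L : language) (M : structure L).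

Definition pinst := {phi : pformula L & 'I_(pk phi) -> M}.

Definition inst_holds (c : pinst) (m : M) : Prop := sol (projT2 c) m.

Definition smaller_than (K : Type) (B : M -> Prop) : Prop :=
  ~ exists f : K -> M, injective f /\ forall k, B (f k).

Definition saturated (K : Type) : Prop :=
  forall (B : M -> Prop), smaller_than K B ->
  forall (p : pinst -> Prop),
    (forall c, p c -> forall i, B (projT2 c i)) ->
    (forall l : list pinst, (forall c, In c l -> p c) ->
        exists m, forall c, In c l -> inst_holds c m) ->
    exists m, forall c, p c -> inst_holds c m.

End Saturation.

Section Closure.
Variables (L : language) (M : structure L).

Definition operator := (M -> Prop) -> (M -> Prop).

Definition finite_set (S : M -> Prop) : Prop :=
  exists l : list M, forall x, S x -> In x l.

Definition atmost (n : nat) (S : M -> Prop) : Prop :=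
  exists l : list M, size l <= n /\ forall x, S x -> In x l.

Definition aclD (Delta : pformula L -> Prop) : operator :=
  fun A x => exists phi, Delta phi /\
    exists a : 'I_(pk phi) -> M, (forall i, A (a i)) /\
      finite_set (sol a) /\ sol a x.

Definition aclDn (Delta : pformula L -> Prop) (n : nat) : operator :=
  fun A x => exists phi, Delta phi /\
    exists a : 'I_(pk phi) -> M, (forall i, A (a i)) /\
      atmost n (sol a) /\ sol a x.

Definition all_formulas : pformula L -> Prop := fun _ => True.
Definition acl : operator := aclD all_formulas.
Definition acln (n : nat) : operator := aclDn all_formulas n.

Definition regular (cl : operator) : Prop :=
  forall A, (forall x, A x -> cl A x) /\ (forall x, cl (cl A) x -> cl A x).

Definition op_le (cl1 cl2 : operator) : Prop := forall A x, cl1 A x -> cl2 A x.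

Definition op_meet (cl1 cl2 : operator) : operator := fun A x => cl1 A x /\ cl2 A x.

Definition in_SL_acl (cl : operator) : Prop :=
  regular cl /\ exists Delta, forall A x, cl A x <-> aclD Delta A x.

Definition in_SL_acln (n : nat) (cl : operator) : Prop :=
  regular cl /\ exists Delta, forall A x, cl A x <-> aclDn Delta n A x.

Definition meet_semilattice_by_intersection (S : operator -> Prop) : Prop :=
  forall cl1 cl2, S cl1 -> S cl2 -> S (op_meet cl1 cl2).

Definition has_least (S : operator -> Prop) : Prop :=
  exists cl0, S cl0 /\ forall cl, S cl -> op_le cl0 cl.

Definition has_greatest (S : operator -> Prop) : Prop :=
  exists cl1, S cl1 /\ forall cl, S cl -> op_le cl cl1.

End Closure.

From Stdlib Require Import List Classical FunctionalExtensionality.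
From mathcomp Require Import ssreflect ssrfun ssrbool eqtype ssrnat seq fintype bigop.
From mathcomp Require Import zify.

(* Regular operators are extensive, so the pointwise intersection of two monotone
   regular operators is again regular, and the identity is the least regular operator.
   What remains is definability by formulae.  acl^D1(A) ∩ acl^D2(A) = acl^D(A), where D
   consists of the conjunctions phi1(x; a1) /\ phi2(x; a2) /\ "phi1(-; a1) has at most
   N1 solutions" /\ "phi2(-; a2) has at most N2 solutions" (with N1 = N2 = n for acl_n).
   The formula x = y defines the identity (for acl_n this needs n >= 1).  Finally acl is
   regular: a parameter b algebraic over A via psi(y; a) is eliminated from phi(x; c, b)
   by exists w, psi(w; a) /\ phi(x; c, w) /\ "phi(-; c, w) has at most N solutions". *)

Set Implicit Arguments.
Unset Strict Implicit.
Unset Printing Implicit Defensive.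

Section Renaming.
Variable L : language.

Fixpoint term_var_bound (t : term L) : nat :=
  match t with
  | tvar j => j
  | tapp f args => \max_(k < farity f) term_var_bound (args k)
  end.

Fixpoint var_bound (phi : formula L) : nat :=
  match phi with
  | fFalse => 0
  | fEq t1 t2 => maxn (term_var_bound t1) (term_var_bound t2)
  | fRel r args => \max_(k < rarity r) term_var_bound (args k)
  | fNeg p | fEx _ p => var_bound p
  | fAnd p q | fOr p q => maxn (var_bound p) (var_bound q)
  end.

Lemma term_free_var_bound (t : term L) i : term_free i t -> i <= term_var_bound t.
Proof.
elim: t => [j /= -> //| f args IH /= [k /IH ik]].
by apply: leq_trans ik _; apply: leq_bigmax.
Qed.

Lemma free_in_var_bound (phi : formula L) i : free_in i phi -> i <= var_bound phi.
Proof.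
elim: phi => //= [t1 t2 [] /term_free_var_bound | r args [k /term_free_var_bound ik]
  | p IHp q IHq [/IHp|/IHq] | p IHp q IHq [/IHp|/IHq] | n p IH [_ /IH]]; try lia.
by apply: leq_trans ik _; apply: leq_bigmax.
Qed.

Definition fresh_var (s : nat -> nat) (b : nat) : nat := (\max_(i < b.+1) s i).+1.

Lemma fresh_var_gt s b i : i <= b -> s i < fresh_var s b.
Proof. by move=> ib; rewrite ltnS (leq_bigmax (Ordinal (ib : i < b.+1))). Qed.

Fixpoint trename (s : nat -> nat) (t : term L) : term L :=
  match t with
  | tvar j => tvar L (s j)
  | tapp f args => @tapp L f (fun k => trename s (args k))
  end.

(* Capture-avoiding: a quantified variable goes to one beyond the images of the
   variables of its scope. *)
Fixpoint rename (s : nat -> nat) (phi : formula L) : formula L :=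
  match phi with
  | fFalse => fFalse L
  | fEq t1 t2 => fEq (trename s t1) (trename s t2)
  | fRel r args => @fRel L r (fun k => trename s (args k))
  | fNeg p => fNeg (rename s p)
  | fAnd p q => fAnd (rename s p) (rename s q)
  | fOr p q => fOr (rename s p) (rename s q)
  | fEx n p => let m := fresh_var s (var_bound p) in
      fEx m (rename (fun i => if i == n then m else s i) p)
  end.

Lemma term_free_trename s (t : term L) i :
  term_free i (trename s t) -> exists2 j, term_free j t & i = s j.
Proof.
elim: t => [j /= ->| f args IH [k /IH [j jt ->]]]; first by exists j.
by exists j => //; exists k.
Qed.

Lemma free_in_rename (phi : formula L) s i :
  free_in i (rename s phi) -> exists2 j, free_in j phi & i = s j.
Proof.
elim: phi s i => //=.
- by move=> t1 t2 s i [|] /term_free_trename [j jt ->]; exists j => //; [left|right].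
- by move=> r args s i [k /term_free_trename [j jt ->]]; exists j => //; exists k.
- by move=> p IHp q IHq s i [/IHp|/IHq] [j jt ->]; exists j => //; [left|right].
- by move=> p IHp q IHq s i [/IHp|/IHq] [j jt ->]; exists j => //; [left|right].
- move=> n p IH s i [im /IH [j jp]]; case: eqP => [_ /im //|jn ->]; by exists j.
Qed.

Fixpoint fAtMost (N : nat) (phi : formula L) : formula L :=
  match N with
  | 0 => fNeg (fEx 0 phi)
  | N'.+1 => let z := (var_bound phi).+1 in
      fEx z (fAtMost N' (fAnd phi (fNeg (fEq (tvar L 0) (tvar L z)))))
  end.

Lemma free_in_fAtMost N (phi : formula L) i :
  free_in i (fAtMost N phi) -> free_in i phi /\ i <> 0.
Proof.
elim: N phi => [|N IH] phi /=; first by case.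
by move=> [iz /IH /= [[//|[]] //= ->]].
Qed.

End Renaming.

Section Semantics.
Variables (L : language) (M : structure L).
Implicit Types (v w : nat -> M) (phi : formula L).

Lemma upd_eq (v : nat -> M) n a : upd v n a n = a.
Proof. by rewrite /upd eqxx. Qed.

Lemma upd_neq (v : nat -> M) n a i : i != n -> upd v n a i = v i.
Proof. by move=> /negbTE ni; rewrite /upd ni. Qed.

Lemma teval_trename s v (t : term L) :
  teval v (trename s t) = teval (fun i => v (s i)) t.
Proof.
elim: t => [//| f args IH /=].
by congr funI; apply: functional_extensionality => k.
Qed.

Lemma teval_eq_free v w (t : term L) :
  (forall i, term_free i t -> v i = w i) -> teval v t = teval w t.
Proof.
elim: t => [j vw /=| f args IH vw /=]; first exact: vw.
congr funI; apply: functional_extensionality => k.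
by apply: IH => i ik; apply: vw; exists k.
Qed.

Lemma sat_eq_free phi v w :
  (forall i, free_in i phi -> v i = w i) -> (sat v phi <-> sat w phi).
Proof.
elim: phi v w => //=.
- move=> t1 t2 v w vw.
  by rewrite (@teval_eq_free v w t1) ?(@teval_eq_free v w t2) //
     => i ?; apply: vw; [right|left].
- move=> r args v w vw.
  suff -> : (fun k => teval v (args k)) = (fun k => teval w (args k)) by [].
  apply: functional_extensionality => k; apply: teval_eq_free => i ik; apply: vw; by exists k.
- by move=> p IH v w vw; rewrite (IH v w vw).
- by move=> p IHp q IHq v w vw; rewrite (IHp v w) ?(IHq v w) // => i ?; apply: vw; [right|left].
- by move=> p IHp q IHq v w vw; rewrite (IHp v w) ?(IHq v w) // => i ?; apply: vw; [right|left].
- move=> n p IH v w vw.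
  have upd_vw a : sat (upd v n a) p <-> sat (upd w n a) p.
    by apply: IH => i ip; rewrite /upd; case: eqP => // ni; apply: vw.
  by split=> -[a]; exists a; apply/upd_vw.
Qed.

Lemma sat_rename phi s v : sat v (rename s phi) <-> sat (fun i => v (s i)) phi.
Proof.
elim: phi s v => //=.
- by move=> t1 t2 s v; rewrite !teval_trename.
- move=> r args s v.
  suff -> : (fun k => teval v (trename s (args k))) =
            (fun k => teval (fun i => v (s i)) (args k)) by [].
  by apply: functional_extensionality => k; rewrite teval_trename.
- by move=> p IH s v; rewrite IH.
- by move=> p IHp q IHq s v; rewrite IHp IHq.
- by move=> p IHp q IHq s v; rewrite IHp IHq.
- move=> n p IH s v; set m := fresh_var s (var_bound p).
  have upd_rename a : sat (upd v m a) (rename (fun i => if i == n then m else s i) p) <->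
                      sat (upd (fun i => v (s i)) n a) p.
    rewrite IH; apply: sat_eq_free => i /free_in_var_bound ip; rewrite /upd.
    case: (i =P n) => [_|_]; first by rewrite eqxx.
    by rewrite ifN // neq_ltn fresh_var_gt.
  by split=> -[a]; exists a; apply/upd_rename.
Qed.

Lemma eq_atmost N (S S' : M -> Prop) :
  (forall x, S x <-> S' x) -> atmost N S <-> atmost N S'.
Proof. by move=> SS'; split=> -[l [lN Sl]]; exists l; split=> // x /SS'; apply: Sl. Qed.

Lemma atmostS N (S : M -> Prop) :
  atmost N.+1 S <-> exists c, atmost N (fun a => S a /\ a <> c).
Proof.
split=> [[[|c l] [lN Sl]]|[c [l [lN Sl]]]].
- by exists (witness M), nil; split=> // x [/Sl].
- by exists c, l; split=> // x [/Sl [->|]].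
- exists (c :: l); split=> // x Sx.
  by case: (classic (x = c)) => [->|xc]; [left | right; apply: Sl].
Qed.

Lemma atmost_finite N (S : M -> Prop) : atmost N S -> finite_set S.
Proof. by move=> [l [_ Sl]]; exists l. Qed.

Lemma sat_fAtMost N phi v :
  sat v (fAtMost N phi) <-> atmost N (fun a => sat (upd v 0 a) phi).
Proof.
elim: N phi v => [|N IH] phi v /=.
  split=> [none | [[|? ?] [//= _ Sl]] [a /Sl //]].
  by exists nil; split=> // a sa; apply: none; exists a.
rewrite atmostS; set z := (var_bound phi).+1.
have upd_z c a : sat (upd (upd v z c) 0 a) phi <-> sat (upd v 0 a) phi.
  apply: sat_eq_free => i /free_in_var_bound ip; rewrite /upd.
  by case: eqP => // _; rewrite ifN // neq_ltn ltnS ip.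
have drop_z c : sat (upd v z c) (fAtMost N (fAnd phi (fNeg (fEq (tvar L 0) (tvar L z))))) <->
                atmost N (fun a => sat (upd v 0 a) phi /\ a <> c).
  by rewrite IH; apply: eq_atmost => a /=; rewrite upd_z /upd /= eqxx.
by split=> -[c /drop_z]; exists c.
Qed.

End Semantics.

Section Environments.
Variables (L : language) (M : structure L).

Lemma env_lt x k (p : 'I_k -> M) j (jk : j < k) : env x p j.+1 = p (Ordinal jk).
Proof.
rewrite /env; case: insubP => [u _ uj|]; last by rewrite jk.
by congr p; apply: val_inj.
Qed.

Lemma env_ge x k (p : 'I_k -> M) j : k <= j -> env x p j.+1 = x.
Proof. by move=> kj; rewrite /env; case: insubP => // u; rewrite ltnNge kj. Qed.

Lemma env_params x y k (p : 'I_k -> M) j : j < k -> env x p j.+1 = env y p j.+1.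
Proof. by move=> jk; rewrite !(env_lt _ _ jk). Qed.

Definition catp k1 k2 (p1 : 'I_k1 -> M) (p2 : 'I_k2 -> M) : 'I_(k1 + k2) -> M :=
  fun i => match split i with inl j => p1 j | inr j => p2 j end.

Lemma catp_split k1 k2 (p : 'I_(k1 + k2) -> M) :
  catp (fun j => p (lshift k2 j)) (fun j => p (rshift k1 j)) = p.
Proof.
apply: functional_extensionality => i; rewrite /catp.
by case: splitP => j ij; congr p; apply: val_inj.
Qed.

Lemma env_catp_l x k1 k2 (p1 : 'I_k1 -> M) (p2 : 'I_k2 -> M) j :
  j < k1 -> env x (catp p1 p2) j.+1 = env x p1 j.+1.
Proof.
move=> jk1; rewrite (env_lt _ _ jk1) (env_lt _ _ (leq_trans jk1 (leq_addr k2 k1))).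
by rewrite /catp; case: splitP => i /= ij; [congr p1; apply: val_inj | lia].
Qed.

Lemma env_catp_r x k1 k2 (p1 : 'I_k1 -> M) (p2 : 'I_k2 -> M) j :
  env x (catp p1 p2) (k1 + j).+1 = env x p2 j.+1.
Proof.
case: (ltnP j k2) => [jk2 | k2j]; last by rewrite !env_ge // leq_add2l.
have jk : k1 + j < k1 + k2 by rewrite ltn_add2l.
rewrite (env_lt _ _ jk2) (env_lt _ _ jk).
rewrite /catp; case: splitP => i /= ij; first by have := ltn_ord i; lia.
by congr p2; apply: val_inj => /=; lia.
Qed.

(* Appends [d] to [q] when [m = n.+1]; larger [m] pads with copies of [d]. *)
Definition snocp n m (q : 'I_n -> M) (d : M) : 'I_m -> M := fun i => env d q i.+1.

Lemma snocp_init_last k (p : 'I_k -> M) (kk : k.-1 < k) :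
  snocp (fun i : 'I_k.-1 => p (widen_ord (leq_pred k) i)) (p (Ordinal kk)) = p.
Proof.
apply: functional_extensionality => i; rewrite /snocp.
case: (ltnP i k.-1) => [ik | ki]; first by rewrite (env_lt _ _ ik); congr p; apply: val_inj.
by rewrite env_ge //; congr p; apply: val_inj => /=; have := ltn_ord i; lia.
Qed.

Lemma sol_eq_env (phi : pformula L) (p : 'I_(pk phi) -> M) x W :
  (forall i, i <= pk phi -> W i = env x p i) -> sat W (pform phi) <-> sol p x.
Proof. by move=> Wp; apply: sat_eq_free => i /pbound /Wp. Qed.

Lemma sol_rename (phi : pformula L) (p : 'I_(pk phi) -> M) x s W :
  (forall i, i <= pk phi -> W (s i) = env x p i) ->
  sat W (rename s (pform phi)) <-> sol p x.
Proof. by move=> Wp; rewrite sat_rename; apply: sol_eq_env. Qed.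

End Environments.

Section Constructions.
Variables (L : language) (M : structure L).

Definition shift_params k (i : nat) : nat := if i == 0 then 0 else i + k.

Definition meet_form (phi1 phi2 : pformula L) (N1 N2 : nat) : formula L :=
  let psi2 := rename (shift_params (pk phi1)) (pform phi2) in
  fAnd (fAnd (pform phi1) psi2) (fAnd (fAtMost N1 (pform phi1)) (fAtMost N2 psi2)).

Lemma meet_form_bound phi1 phi2 N1 N2 i :
  free_in i (meet_form phi1 phi2 N1 N2) -> i <= pk phi1 + pk phi2.
Proof.
have bound1 : free_in i (pform phi1) -> i <= pk phi1 + pk phi2 by move/pbound; lia.
have bound2 : free_in i (rename (shift_params (pk phi1)) (pform phi2)) ->
              i <= pk phi1 + pk phi2.
  by move=> /free_in_rename [j /pbound jk ->]; rewrite /shift_params; case: eqP; lia.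
by move=> /= [[/bound1|/bound2] | [/free_in_fAtMost [/bound1] | /free_in_fAtMost [/bound2]]].
Qed.

Definition meet_pformula phi1 phi2 N1 N2 : pformula L :=
  PFormula (@meet_form_bound phi1 phi2 N1 N2).

Lemma sol_meet_pformula phi1 phi2 N1 N2 (p1 : 'I_(pk phi1) -> M) (p2 : 'I_(pk phi2) -> M) x :
  sol (phi := meet_pformula phi1 phi2 N1 N2) (catp p1 p2) x <->
  (sol p1 x /\ sol p2 x) /\ (atmost N1 (sol p1) /\ atmost N2 (sol p2)).
Proof.
set P := catp p1 p2.
have conjuncts y W : W 0 = y -> (forall i, 0 < i -> W i = env x P i) ->
    (sat W (pform phi1) <-> sol p1 y) /\
    (sat W (rename (shift_params (pk phi1)) (pform phi2)) <-> sol p2 y).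
  move=> W0 WP; split.
    apply: sol_eq_env => -[//|j] jk.
    by rewrite WP // env_catp_l // (env_params x y).
  apply: sol_rename => -[//|j] jk.
  by rewrite /shift_params /= addSn WP // (addnC j) env_catp_r (env_params x y).
have [sol1 sol2] := conjuncts x (env x P) erefl (fun _ _ => erefl).
have upd_conjuncts a := conjuncts a (upd (env x P) 0 a) (upd_eq _ _ _)
                                   (fun i i0 => upd_neq _ _ (lt0n_neq0 i0)).
rewrite /sol /= !sat_fAtMost sol1 sol2 (eq_atmost N1 (fun a => (upd_conjuncts a).1)).
by rewrite (eq_atmost N2 (fun a => (upd_conjuncts a).2)).
Qed.

Definition witness_var (psi phi : pformula L) : nat := (pk psi + (pk phi).-1).+1.

Definition psi_at_witness psi phi : formula L :=
  rename (fun i => if i == 0 then witness_var psi phi else i) (pform psi).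

Definition phi_at_witness psi phi : formula L :=
  rename (fun i => if i == 0 then 0 else if i < pk phi then i + pk psi else witness_var psi phi)
         (pform phi).

Definition subst_form psi phi N : formula L :=
  fEx (witness_var psi phi) (fAnd (psi_at_witness psi phi)
    (fAnd (phi_at_witness psi phi) (fAtMost N (phi_at_witness psi phi)))).

Lemma subst_form_bound psi phi N i :
  free_in i (subst_form psi phi N) -> i <= pk psi + (pk phi).-1.
Proof.
have bound_phi : i <> witness_var psi phi -> free_in i (phi_at_witness psi phi) ->
                 i <= pk psi + (pk phi).-1.
  move=> iw /free_in_rename [j /pbound jk ij]; move: ij iw.
  by rewrite /witness_var; case: eqP => _; [|case: ifP]; lia.
move=> /= [iw [/free_in_rename [j /pbound jk] | [/(bound_phi iw) | /free_in_fAtMost []]]] //.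
  by move: iw; rewrite /witness_var; case: eqP => _; lia.
by move=> /(bound_phi iw).
Qed.

Definition subst_pformula psi phi N : pformula L :=
  PFormula (@subst_form_bound psi phi N).

Lemma sol_subst_pformula psi phi N (a : 'I_(pk psi) -> M) (q : 'I_((pk phi).-1) -> M) y :
  sol (phi := subst_pformula psi phi N) (catp a q) y <->
  exists d, sol a d /\ sol (phi := phi) (snocp q d) y /\ atmost N (sol (phi := phi) (snocp q d)).
Proof.
set P := catp a q; set w := witness_var psi phi.
have w_def : w = (pk psi + (pk phi).-1).+1 by [].
have head W d : W w = d -> (forall i, 0 < i < w -> W i = env y P i) ->
    sat W (psi_at_witness psi phi) <-> sol a d.
  move=> Ww WP; apply: sol_rename => -[//|j] jk.
  by rewrite [W _]/= WP ?env_catp_l ?(env_params y d) //; lia.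
have last W d z : W 0 = z -> W w = d -> (forall i, 0 < i < w -> W i = env y P i) ->
    sat W (phi_at_witness psi phi) <-> sol (phi := phi) (snocp q d) z.
  move=> W0 Ww WP; apply: sol_rename => -[//|j] jk.
  rewrite (env_lt _ _ jk) /snocp [W _]/=; case: (ltnP j.+1 (pk phi)) => jk'.
    by rewrite addSn WP ?(addnC j) ?env_catp_r ?(env_params y d) //; lia.
  by rewrite Ww env_ge //=; lia.
have step d : sat (upd (env y P) w d) (fAnd (psi_at_witness psi phi)
      (fAnd (phi_at_witness psi phi) (fAtMost N (phi_at_witness psi phi)))) <->
    sol a d /\ sol (phi := phi) (snocp q d) y /\ atmost N (sol (phi := phi) (snocp q d)).
  have below_w i : 0 < i < w -> i != w /\ i != 0 by lia.
  have upd_w i : 0 < i < w -> upd (env y P) w d i = env y P i.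
    by move=> /below_w [iw _]; rewrite upd_neq.
  have upd_0w z i : 0 < i < w -> upd (upd (env y P) w d) 0 z i = env y P i.
    by move=> /below_w [iw i0]; rewrite !upd_neq.
  have upd_0w_w z : upd (upd (env y P) w d) 0 z w = d by rewrite upd_neq // upd_eq.
  rewrite /= sat_fAtMost (head _ d (upd_eq _ _ _) upd_w) (last _ d y _ (upd_eq _ _ _) upd_w) //.
  by rewrite (eq_atmost N (fun z => last _ d z (upd_eq _ _ _) (upd_0w_w z) (upd_0w z))).
by split=> -[d /step]; exists d.
Qed.

End Constructions.

Section AlgebraicClosure.
Variables (L : language) (M : structure L).
Implicit Types (D : pformula L -> Prop) (A : M -> Prop).

Lemma eq_form_bound i : free_in i (fEq (tvar L 0) (tvar L 1)) -> i <= 1.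
Proof. by move=> /= [->|->]. Qed.

Definition eq_pformula : pformula L := PFormula eq_form_bound.

Lemma sol_eq_pformula (a : 'I_1 -> M) x : sol (phi := eq_pformula) a x <-> x = a ord0.
Proof.
change (x = env x a 1 <-> x = a ord0).
by rewrite (env_lt _ _ (ltn0Sn 0)); have -> : Ordinal (ltn0Sn 0) = ord0 by apply: val_inj.
Qed.

Lemma aclDn_aclD D n A x : aclDn D n A x -> aclD D A x.
Proof.
by move=> [phi [Dphi [a [aA [/atmost_finite fin ax]]]]]; exists phi; split=> //; exists a.
Qed.

Lemma aclDn_eq_pformula D n A x : 0 < n -> D eq_pformula -> A x -> aclDn D n A x.
Proof.
move=> n0 Deq Ax; exists eq_pformula; split=> //; exists (fun _ => x); split=> //.
split; last exact/sol_eq_pformula.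
by exists [:: x]; split=> // y /sol_eq_pformula ->; left.
Qed.

Lemma aclD_eq_pformula D A x : D eq_pformula -> A x -> aclD D A x.
Proof. by move=> Deq Ax; apply: (@aclDn_aclD _ 1); apply: aclDn_eq_pformula. Qed.

Lemma aclD_eq_only A x : aclD (eq^~ eq_pformula) A x -> A x.
Proof. by move=> [_ [-> [a [aA [_ /sol_eq_pformula ->]]]]]. Qed.

Lemma acl_extensive A x : A x -> acl A x.
Proof. exact: aclD_eq_pformula. Qed.

Lemma finite_atmost_union (l : list M) (S : M -> M -> Prop) N :
  finite_set (fun y => exists d, In d l /\ atmost N (S d) /\ S d y).
Proof.
elim: l => [|d0 l [l' l'S]]; first by exists nil => y [d [[] _]].
case: (classic (atmost N (S d0))) => [[l0 [_ l0S]] | not_atmost].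
  exists (l0 ++ l') => y [d [[<-|ld] [dN dy]]]; apply/in_or_app; first by left; apply: l0S.
  by right; apply: l'S; exists d.
exists l' => y [d [[<-|ld] [dN dy]]] //; apply: l'S; by exists d.
Qed.

(* Induction on the number [j] of parameters not known to lie in [A]: the last one is
   algebraic over [A], say via [psi(-; a)], and [subst_pformula] trades it for the
   parameters [a], which lie in [A]. *)
Lemma acl_elim_params A j : forall r (phi : pformula L) (p : 'I_(pk phi) -> M) x,
  pk phi = r + j -> (forall i : 'I_(pk phi), i < r -> A (p i)) ->
  (forall i, acl A (p i)) -> finite_set (sol p) -> sol p x -> acl A x.
Proof.
elim: j => [|j IH] r phi p x k_rj pA pacl [l pl] px.
  exists phi; split=> //; exists p; split; last by split=> //; exists l.
  by move=> i; apply: pA; have := ltn_ord i; lia.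
have kk : (pk phi).-1 < pk phi by lia.
have [psi [_ [a [aA [[la ala] psib]]]]] := pacl (Ordinal kk).
set q := fun i : 'I_(pk phi).-1 => p (widen_ord (leq_pred _) i).
have pqb : snocp q (p (Ordinal kk)) = p := snocp_init_last p kk.
apply: (IH (pk psi + r) (subst_pformula psi phi (size l)) (catp a q)).
- by rewrite /= k_rj; lia.
- move=> i; rewrite /catp; case: splitP => i' /= ii' ir; first exact: aA.
  by apply: pA => /=; lia.
- by move=> i; rewrite /catp; case: splitP => i' _; [apply: acl_extensive | apply: pacl].
- have [l' l'S] := finite_atmost_union la (fun d => sol (phi := phi) (snocp q d)) (size l).
  exists l' => y /sol_subst_pformula [d [ad [dy dN]]]; apply: l'S.
  by exists d; split; [apply: ala | split].
- apply/sol_subst_pformula; exists (p (Ordinal kk)); rewrite pqb.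
  by split=> //; split=> //; exists l.
Qed.

Lemma regular_acl : regular (@acl L M).
Proof.
move=> A; split=> [x | x [phi [_ [p [pacl [pfin px]]]]]]; first exact: acl_extensive.
by apply: (@acl_elim_params A (pk phi) 0 phi p).
Qed.

End AlgebraicClosure.

Section FormulaIndexedOperators.
Variables (L : language) (M : structure L).
Implicit Types (cl : operator M) (D : pformula L -> Prop).

Definition monotone cl :=
  forall B C : M -> Prop, (forall x, B x -> C x) -> forall x, cl B x -> cl C x.

Lemma regular_op_meet cl1 cl2 :
  monotone cl1 -> monotone cl2 -> regular cl1 -> regular cl2 -> regular (op_meet cl1 cl2).
Proof.
move=> mon1 mon2 reg1 reg2 A; split=> [x Ax | x [x1 x2]].
  by split; [apply: (reg1 A).1 | apply: (reg2 A).1].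
split; [apply: (reg1 A).2; apply: mon1 x1 | apply: (reg2 A).2; apply: mon2 x2]; by move=> y [].
Qed.

Variable F : (pformula L -> Prop) -> operator M.

Definition in_SL cl : Prop := regular cl /\ exists D, forall A x, cl A x <-> F D A x.

Lemma in_SL_meet :
  (forall D, monotone (F D)) ->
  (forall D1 D2, exists D, forall A x, F D A x <-> F D1 A x /\ F D2 A x) ->
  meet_semilattice_by_intersection in_SL.
Proof.
move=> Fmon Fmeet cl1 cl2 [reg1 [D1 e1]] [reg2 [D2 e2]]; have [D eD] := Fmeet D1 D2.
have mon_ext cl D' : (forall A x, cl A x <-> F D' A x) -> monotone cl.
  by move=> e B C BC x /e clx; apply/e; apply: Fmon BC x clx.
split; first by apply: regular_op_meet => //; [apply: mon_ext e1 | apply: mon_ext e2].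
by exists D => A x; rewrite eD -e1 -e2.
Qed.

Lemma in_SL_least : (exists D, forall A x, F D A x <-> A x) -> has_least in_SL.
Proof.
move=> [D eD]; exists (fun A => A); split; last by move=> cl [reg _] A x; apply: (reg A).1.
by split; [by [] | exists D => A x; rewrite eD].
Qed.

Lemma in_SL_greatest :
  (forall D, op_le (F D) (F (@all_formulas L))) -> regular (F (@all_formulas L)) ->
  has_greatest in_SL.
Proof.
move=> Fle reg; exists (F (@all_formulas L)).
split; first by split=> //; exists (@all_formulas L).
by move=> cl [_ [D eD]] A x /eD; apply: Fle.
Qed.

End FormulaIndexedOperators.

Section AlgebraicClosureFamilies.
Variables (L : language) (M : structure L).
Implicit Types (D : pformula L -> Prop).

Lemma aclDn_monotone D n : monotone (aclDn (M := M) D n).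
Proof.
move=> B C BC x [phi [Dphi [a [aB ax]]]].
by exists phi; split=> //; exists a; split=> // i; apply: BC.
Qed.

Lemma aclD_monotone D : monotone (aclD (M := M) D).
Proof.
move=> B C BC x [phi [Dphi [a [aB ax]]]].
by exists phi; split=> //; exists a; split=> // i; apply: BC.
Qed.

Lemma aclDn_le_acln D n : op_le (aclDn (M := M) D n) (@acln L M n).
Proof. by move=> A x [phi [_ ax]]; exists phi. Qed.

Lemma aclD_le_acl D : op_le (aclD (M := M) D) (@acl L M).
Proof. by move=> A x [phi [_ ax]]; exists phi. Qed.

Lemma aclDn_meet D1 D2 n : exists D, forall A x,
  aclDn (M := M) D n A x <-> aclDn D1 n A x /\ aclDn D2 n A x.
Proof.
exists (fun chi => exists phi1 phi2, D1 phi1 /\ D2 phi2 /\ chi = meet_pformula phi1 phi2 n n).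
move=> A x; split.
  move=> [_ [[phi1 [phi2 [D1phi [D2phi ->]]]] [p [pA [_]]]]].
  rewrite -(catp_split p) sol_meet_pformula => -[[x1 x2] [n1 n2]].
  split; [exists phi1 | exists phi2]; split=> //.
    by exists (fun j => p (lshift _ j)); split=> // i; apply: pA.
  by exists (fun j => p (rshift _ j)); split=> // i; apply: pA.
move=> [[phi1 [D1phi [p1 [p1A [n1 x1]]]]] [phi2 [D2phi [p2 [p2A [n2 x2]]]]]].
exists (meet_pformula phi1 phi2 n n); split; first by exists phi1, phi2.
exists (catp p1 p2); split; first by move=> i; rewrite /catp; case: split.
split; last by apply/sol_meet_pformula.
by case: n1 => l [ln l1]; exists l; split=> // y /sol_meet_pformula [[/l1]].
Qed.

Lemma aclD_meet D1 D2 : exists D, forall A x,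
  aclD (M := M) D A x <-> aclD D1 A x /\ aclD D2 A x.
Proof.
exists (fun chi => exists phi1 phi2 N1 N2,
  D1 phi1 /\ D2 phi2 /\ chi = meet_pformula phi1 phi2 N1 N2).
move=> A x; split.
  move=> [_ [[phi1 [phi2 [N1 [N2 [D1phi [D2phi ->]]]]]] [p [pA [_]]]]].
  rewrite -(catp_split p) sol_meet_pformula => -[[x1 x2] [/atmost_finite f1 /atmost_finite f2]].
  split; [exists phi1 | exists phi2]; split=> //.
    by exists (fun j => p (lshift _ j)); split=> // i; apply: pA.
  by exists (fun j => p (rshift _ j)); split=> // i; apply: pA.
move=> [[phi1 [D1phi [p1 [p1A [[l1 l1S] x1]]]]] [phi2 [D2phi [p2 [p2A [[l2 l2S] x2]]]]]].
exists (meet_pformula phi1 phi2 (size l1) (size l2)); split.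
  by exists phi1, phi2, (size l1), (size l2).
exists (catp p1 p2); split; first by move=> i; rewrite /catp; case: split.
split; first by exists l1 => y /sol_meet_pformula [[/l1S]].
by apply/sol_meet_pformula; do !split=> //; [exists l1 | exists l2].
Qed.

End AlgebraicClosureFamilies.

Theorem mainTheorem7 (L : language) (T : formula L -> Prop)
  (K : Type) (M : structure L) :
  complete_theory T ->
  (exists f : nat -> K, injective f) ->
  models M T ->
  saturated M K ->
  (meet_semilattice_by_intersection (@in_SL_acl L M) /\
   has_least (@in_SL_acl L M) /\ has_greatest (@in_SL_acl L M)) /\
  (forall n : nat, 0 < n ->
     meet_semilattice_by_intersection (@in_SL_acln L M n) /\
     has_least (@in_SL_acln L M n) /\
     (regular (@acln L M n) -> has_greatest (@in_SL_acln L M n))).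
Proof.
move=> _ _ _ _; split=> [|n n0]; split.
- exact: in_SL_meet (@aclD_monotone L M) (@aclD_meet L M).
- split; last exact: in_SL_greatest (@aclD_le_acl L M) (@regular_acl L M).
  apply: in_SL_least; exists (eq^~ (eq_pformula L)) => A x.
  by split; [apply: aclD_eq_only | apply: aclD_eq_pformula].
- exact: in_SL_meet (fun D => @aclDn_monotone L M D n) (fun D1 D2 => @aclDn_meet L M D1 D2 n).
- split=> [|reg]; last exact: in_SL_greatest (fun D => @aclDn_le_acln L M D n) reg.
  apply: in_SL_least; exists (eq^~ (eq_pformula L)) => A x.
  by split; [move/aclDn_aclD; apply: aclD_eq_only | apply: aclDn_eq_pformula].
Qed.
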